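(* Let $n\ge1$. For every $c\in M_n$ we have $C(c)\in M_n$ and $C^n(c)=c$, where $C$ is the crawl map.
   Context: $M_n$ is the set of integer sequences $c=(c_1,\dots,c_n)$ for which there is $0\le k\le n-1$ with $c_1=\dots=c_k=0$, $c_{k+1},\dots,c_n>0$, and $\sum_{i=k+1}^{n}c_i=n$. The crawl map $C:M_n\to M_n$ sends $c$ to $c'$ where, for $1\le i\le n-1$, $c'_i=\max\{0,c_{i+1}-1\}$ if $c_1,\dots,c_i\le1$, and $c'_i=c_{i+1}$ otherwise; and $c'_n=n-\sum_{i=1}^{n-1}c'_i$. *)

From mathcomp Require Import all_boot all_order all_algebra.
Set Implicit Arguments. Unset Strict Implicit. Unset Printing Implicit Defensive.
Import Order.TTheory GRing.Theory Num.Theory.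
Local Open Scope ring_scope.

(* Sequences c = (c_1,...,c_n) are represented as s : seq int of size n,
   with c_i = nth 0 s (i-1)  (0-based indexing internally). *)

Definition inM (n : nat) (c : seq int) : Prop :=
  size c = n /\
  exists k : nat, (k <= n.-1)%N /\
    (forall i : nat, (i < k)%N -> nth 0 c i = 0) /\
    (forall i : nat, (k <= i < n)%N -> 0 < nth 0 c i) /\
    \sum_(k <= i < n) nth 0 c i = n%:Z.

(* The crawl map (0-based): for j < n-1 (i.e. i = j+1 in 1..n-1),
   c'_{j} = max(0, c_{j+1} - 1) if c_0..c_j <= 1, else c_{j+1};
   c'_{n-1} = n - sum_{j<n-1} c'_j. *)
Definition crawl_entry (c : seq int) (j : nat) : int :=
  if all (fun x => x <= 1) (take j.+1 c)
  then Num.max 0 (nth 0 c j.+1 - 1)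
  else nth 0 c j.+1.

Definition crawl (n : nat) (c : seq int) : seq int :=
  let front := mkseq (crawl_entry c) n.-1 in
  rcons front (n%:Z - \sum_(x <- front) x).

From mathcomp Require Import all_boot all_order all_algebra zify.
Set Implicit Arguments. Unset Strict Implicit. Unset Printing Implicit Defensive.

(* Encode c in M_n by the binary word of length n obtained by writing each positive entry x
   as 0^(x-1) 1.  The crawl map becomes the word map [crawlw]: if the word starts with 1^i 0,
   move these i+1 letters to the end and complement them.  Extend a word w of length n ending
   in 1 to the sequence e with e (i + n) = ~~ e i.  The words reached by [crawlw] from w are
   the length-n windows of e, and each step moves the window just past the next 0 of e.  As e
   has exactly n zeros in [0, 2n) and e (2n-1) = 0, after n steps the window starts at 2n,
   where it reads w again. *)

Definition negrot (w : seq bool) := rcons (behead w) (~~ head false w).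

Definition crawlw (w : seq bool) := iter (find negb w).+1 negrot w.

Lemma iter_negrot m w :
  m <= size w -> iter m negrot w = drop m w ++ map negb (take m w).
Proof.
elim: m => [|m IH] mw /=; first by rewrite drop0 take0 cats0.
rewrite IH ?(ltnW mw) // (drop_nth false mw) (take_nth false mw) map_rcons.
by rewrite /negrot /= rcons_cat.
Qed.

Lemma find_negb_nseq_true i t : find negb (nseq i true ++ false :: t) = i.
Proof. by elim: i => //= i ->. Qed.

Lemma crawlw_cat i t : crawlw (nseq i true ++ false :: t) = t ++ rcons (nseq i false) true.
Proof.
rewrite /crawlw find_negb_nseq_true iter_negrot; last first.
  by rewrite size_cat size_nseq /= addnS ltnS leq_addr.
rewrite -cat_rcons drop_size_cat ?take_size_cat ?size_rcons ?size_nseq //.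
by rewrite map_rcons map_nseq.
Qed.

Lemma crawlw_nseq_true m : crawlw (nseq m.+1 true) = rcons (nseq m false) true.
Proof.
have find_m : find negb (nseq m.+1 true) = m.+1 by elim: m.+1 => //= k ->.
rewrite /crawlw find_m iterS iter_negrot ?size_nseq //.
by rewrite drop_oversize ?size_nseq // take_oversize ?size_nseq // map_nseq.
Qed.

Section CrawlWordPeriod.

Variables (n : nat) (w : seq bool).
Hypotheses (n_gt0 : 0 < n) (size_w : size w = n) (last_w : last false w).

Definition antiext i := odd (i %/ n) (+) nth false w (i %% n).

Definition window i := mkseq (fun k => antiext (i + k)) n.

Definition zeros t := count (fun k => ~~ antiext k) (iota 0 t).

Lemma antiext_addn i : antiext (i + n) = ~~ antiext i.
Proof.
rewrite /antiext -{1}(mul1n n) addnC divnMDl // modnDr oddD /=.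
by case: (odd _); case: (nth _ _ _).
Qed.

Lemma negrot_window i : negrot (window i) = window i.+1.
Proof.
have [m n_eq] : exists m, n = m.+1 by exists n.-1; rewrite prednK.
apply: (@eq_from_nth _ false).
  by rewrite size_rcons size_behead !size_mkseq n_eq.
rewrite size_rcons size_behead size_mkseq n_eq /= => k k_lt.
rewrite nth_rcons size_behead size_mkseq n_eq /=; case: ltnP => km.
  by rewrite nth_behead /window n_eq !nth_mkseq // addSnnS.
have -> : k = m by apply/eqP; rewrite eqn_leq km -ltnS k_lt.
by rewrite eqxx /window n_eq nth_mkseq //= addn0 addSnnS -n_eq antiext_addn.
Qed.

Lemma iter_negrot_window m i : iter m negrot (window i) = window (i + m).
Proof. by elim: m => [|m IH]; rewrite ?addn0 // iterS IH negrot_window addnS. Qed.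

Lemma window0 : window 0 = w.
Proof.
apply: (@eq_from_nth _ false); rewrite size_mkseq ?size_w // => k kn.
by rewrite nth_mkseq // /antiext add0n divn_small // modn_small.
Qed.

Lemma window_double : window (n + n) = w.
Proof.
by rewrite -window0; apply: eq_mkseq => k; rewrite add0n addnC addnA !antiext_addn negbK.
Qed.

Lemma zerosS t : zeros t.+1 = zeros t + ~~ antiext t.
Proof. by rewrite /zeros -addn1 iotaD count_cat /= addn0. Qed.

Lemma leq_zeros a b : a <= b -> zeros a <= zeros b.
Proof. by move=> ab; rewrite /zeros -(subnKC ab) iotaD count_cat leq_addr. Qed.

Lemma zeros_after_zero b : 0 < b -> ~~ antiext b.-1 -> zeros b = (zeros b.-1).+1.
Proof. by move=> b_gt0 eb; rewrite -{1}(prednK b_gt0) zerosS eb addn1. Qed.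

Lemma zeros_after_zero_inj a b : 0 < a -> 0 < b -> ~~ antiext a.-1 -> ~~ antiext b.-1 ->
  zeros a = zeros b -> a = b.
Proof.
have lt_zeros x y : 0 < y -> ~~ antiext y.-1 -> x < y -> zeros x < zeros y.
  move=> y_gt0 ey xy; rewrite (zeros_after_zero y_gt0 ey) ltnS leq_zeros //.
  by rewrite -ltnS prednK.
move=> a_gt0 b_gt0 ea eb; case: (ltngtP a b) => // [ab|ba] eab.
  by have := lt_zeros _ _ b_gt0 eb ab; rewrite eab ltnn.
by have := lt_zeros _ _ a_gt0 ea ba; rewrite eab ltnn.
Qed.

Lemma zeros_double : zeros (n + n) = n.
Proof.
have shift : iota n n = map (addn n) (iota 0 n) by rewrite -iotaDl addn0.
rewrite /zeros iotaD count_cat add0n shift count_map.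
have -> : count (preim (addn n) (fun k => ~~ antiext k)) (iota 0 n) = count antiext (iota 0 n).
  by apply: eq_count => k /=; rewrite addnC antiext_addn negbK.
by rewrite addnC count_predC size_iota.
Qed.

Lemma antiext_double_pred : ~~ antiext (n + n).-1.
Proof.
rewrite -subn1 -addnBA // subn1 addnC antiext_addn negbK /antiext.
by rewrite divn_small ?modn_small ?prednK // -size_w nth_last.
Qed.

Lemma crawlw_window i : let f := find negb (window i) in
  crawlw (window i) = window (i + f.+1) /\
  zeros (i + f.+1) = (zeros i).+1 /\ ~~ antiext (i + f).
Proof.
move=> f; split; first exact: iter_negrot_window.
have f_le : f <= n by rewrite -[n](size_mkseq (fun k => antiext (i + k))) find_size.
have antiext_before k : k < f -> antiext (i + k).
  move=> kf; have := before_find false kf; rewrite nth_mkseq ?(leq_trans kf) //.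
  by move/negbFE.
have antiext_f : ~~ antiext (i + f).
  have [fn|fn] := ltnP f n.
    have := nth_find false (_ : has negb (window i)); rewrite has_find size_mkseq.
    by rewrite nth_mkseq //; apply.
  have -> : f = n by apply/eqP; rewrite eqn_leq f_le fn.
  by rewrite antiext_addn negbK -[i]addn0 antiext_before // (leq_trans n_gt0 fn).
have zeros_upto m : m <= f -> zeros (i + m) = zeros i.
  elim: m => [|m IH] mf; first by rewrite addn0.
  by rewrite addnS zerosS IH ?antiext_before ?(ltnW mf) // addn0.
by rewrite addnS zerosS zeros_upto // antiext_f addn1.
Qed.

Lemma iter_crawlw k : exists R,
  [/\ iter k crawlw w = window R, zeros R = k & 0 < k -> ~~ antiext R.-1].
Proof.
elim: k => [|k [R [wR zR _]]]; first by exists 0; rewrite window0.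
have [wR' [zR' eR']] := crawlw_window R.
exists (R + (find negb (window R)).+1); split; first by rewrite iterS wR.
  by rewrite zR' zR.
by rewrite addnS.
Qed.

Theorem crawlw_period : iter n crawlw w = w.
Proof.
have [R [wR zR eR]] := iter_crawlw n.
have R_gt0 : 0 < R by rewrite lt0n; apply: contraTneq n_gt0 => R0; rewrite -zR R0.
suff R_eq : R = n + n by rewrite wR R_eq window_double.
apply: zeros_after_zero_inj; rewrite ?addn_gt0 ?n_gt0 ?eR ?antiext_double_pred //.
by rewrite zR zeros_double.
Qed.

End CrawlWordPeriod.

Import Order.TTheory GRing.Theory Num.Theory.
Local Open Scope ring_scope.

Implicit Types (p q u R : seq int) (x : int).

Definition is_composition (n : nat) (p : seq int) :=
  all (fun x => 0 < x) p /\ \sum_(x <- p) x = n%:Z.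

Definition part_word (x : int) : seq bool :=
  if 0 < x then rcons (nseq (absz x).-1 false) true else [::].

Definition comp_word (p : seq int) : seq bool := flatten (map part_word p).

Definition pad (n : nat) (p : seq int) : seq int := nseq (n - size p) 0 ++ p.

Lemma comp_word_cat p q : comp_word (p ++ q) = comp_word p ++ comp_word q.
Proof. by rewrite /comp_word map_cat flatten_cat. Qed.

Lemma comp_word_cons x p : comp_word (x :: p) = part_word x ++ comp_word p.
Proof. by []. Qed.

Lemma comp_word1 x : comp_word [:: x] = part_word x.
Proof. exact: cats0. Qed.

Lemma comp_word_nseq1 i : comp_word (nseq i 1) = nseq i true.
Proof. by elim: i => // i IH; exact: (congr1 (cons true) IH). Qed.

Lemma part_wordS m : part_word m.+1%:Z = rcons (nseq m false) true.
Proof. by []. Qed.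

Lemma sumz_nseq (k : nat) (x : int) : \sum_(y <- nseq k x) y = x *+ k.
Proof. by rewrite big_nseq; elim: k => //= k ->; rewrite mulrS. Qed.

Lemma size_le_sum p : all (fun x => 0 < x) p -> (size p)%:Z <= \sum_(x <- p) x.
Proof.
elim: p => [|x p IH] /=; first by rewrite big_nil.
by case/andP => x_gt0 /IH; rewrite big_cons -add1n PoszD; apply: lerD.
Qed.

Lemma size_comp_word p :
  all (fun x => 0 < x) p -> (size (comp_word p))%:Z = \sum_(x <- p) x.
Proof.
elim: p => [|x p IH] /=; first by rewrite big_nil.
case/andP => x_gt0 /IH; rewrite big_cons comp_word_cons size_cat PoszD => ->.
by case: x x_gt0 => [[|m]|] //= _; rewrite size_rcons size_nseq.
Qed.

Lemma last_comp_word p :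
  all (fun x => 0 < x) p -> p != [::] -> last false (comp_word p).
Proof.
case/lastP: p => // p x; rewrite all_rcons => /andP [x_gt0 _] _.
by rewrite -cats1 comp_word_cat comp_word1 /part_word x_gt0 last_cat last_rcons.
Qed.

Lemma comp_word_consS m p :
  comp_word (m.+1%:Z :: p) = nseq m false ++ true :: comp_word p.
Proof. by rewrite comp_word_cons part_wordS -cats1 -catA. Qed.

Lemma nseq_false_true_inj a b s t :
  nseq a false ++ true :: s = nseq b false ++ true :: t -> a = b /\ s = t.
Proof. by elim: a b => [|a IH] [|b] //= [] // /IH [-> ->]. Qed.

Lemma comp_word_inj p q : all (fun x => 0 < x) p -> all (fun x => 0 < x) q ->
  comp_word p = comp_word q -> p = q.
Proof.
elim: p q => [|x p IH] [|y q] //=.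
- by case: y => [[|y]|] // _ /andP [_ _]; rewrite comp_word_consS; case: y.
- by case: x => [[|x]|] // /andP [_ _]; rewrite comp_word_consS; case: x.
case: x y => [[|x]|] // [[|y]|] // /andP [_ /IH {}IH] /andP [_ /IH {}IH].
by rewrite !comp_word_consS => /nseq_false_true_inj [-> /IH ->].
Qed.

Lemma crawlE n (c F : seq int) :
  size F = n.-1 -> (forall j, crawl_entry c j = nth 0 F j) ->
  crawl n c = rcons F (n%:Z - \sum_(x <- F) x).
Proof.
move=> size_F entryE; rewrite /crawl -size_F -{3 4}(mkseq_nth 0 F).
by under eq_mkseq do rewrite entryE.
Qed.

Lemma crawl_entry_nseq1 m j : crawl_entry (nseq m 1) j = 0.
Proof.
rewrite /crawl_entry; have -> : all (fun x : int => x <= 1) (take j.+1 (nseq m 1)).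
  by apply/allP => x /mem_take /nseqP [-> _].
by rewrite nth_nseq; case: ltnP.
Qed.

Lemma all_le1_take_cat u (a : int) R m : all (fun x => x <= 1) u -> 1 < a ->
  all (fun x => x <= 1) (take m (u ++ a :: R)) = (m <= size u)%N.
Proof.
move=> u_le1 a_gt1; rewrite take_cat; case: ltnP => mu.
  by rewrite (ltnW mu); apply/allP => x /mem_take /(allP u_le1).
rewrite all_cat u_le1; case: (m - size u)%N (subnKC mu) => [|k] /= <-.
  by rewrite addn0 leqnn.
by rewrite leNgt a_gt1 addnS ltnNge leq_addr.
Qed.

Lemma crawl_entry_cat u (a : int) R j :
  all (fun x => 0 <= x <= 1) u -> 1 < a -> (0 < size u)%N ->
  crawl_entry (u ++ a :: R) j = nth 0 (nseq (size u).-1 0 ++ (a - 1) :: R) j.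
Proof.
move=> u01 a_gt1 u_gt0.
have u_le1 : all (fun x => x <= 1) u by apply: sub_all u01 => x /andP [].
rewrite /crawl_entry all_le1_take_cat // !nth_cat size_nseq.
case: (ltngtP j.+1 (size u)) => ju.
- have j_lt : (j < (size u).-1)%N by rewrite -ltnS prednK.
  rewrite j_lt nth_nseq j_lt.
  by have /andP [_ le1] := allP u01 _ (mem_nth 0 ju); rewrite max_l // subr_le0.
- have j_ge : ((size u).-1 <= j)%N by rewrite -ltnS prednK // ltnW.
  rewrite ltnNge j_ge /=.
  have -> : (j.+1 - size u = (j - size u).+1)%N by rewrite subSn.
  by have -> : (j - (size u).-1 = (j - size u).+1)%N by lia.
- by rewrite -ju subnn ltnn subnn /= max_r // subr_ge0 ltW.
Qed.

Lemma crawl_nseq1 n : (0 < n)%N -> crawl n (nseq n 1) = pad n [:: n%:Z].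
Proof.
move=> n_gt0; rewrite (@crawlE _ _ (nseq n.-1 0)) ?size_nseq //; last first.
  by move=> j; rewrite crawl_entry_nseq1 nth_nseq if_same.
by rewrite sumz_nseq mul0rn subr0 /pad subn1 cats1.
Qed.

Lemma crawl_pad_ones_cons n i m R :
  is_composition n (nseq i 1 ++ m.+2%:Z :: R) ->
  crawl n (pad n (nseq i 1 ++ m.+2%:Z :: R)) = pad n (m.+1%:Z :: rcons R i.+1%:Z).
Proof.
rewrite /is_composition all_cat big_cat big_cons sumz_nseq natz /= => -[/andP [_ R_pos]].
(* The two sums below differ in their canonical instances; naming them gives [lia] one atom. *)
move: (size_le_sum R_pos); move sR_eq : (\sum_(x <- R) x) => sR R_le sum_eq.
rewrite /pad catA size_cat size_nseq /= size_rcons.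
set u := nseq _ 0 ++ nseq i 1.
have size_u : size u = (n - (i + (size R).+1) + i)%N by rewrite size_cat !size_nseq.
rewrite (@crawlE _ _ (nseq (size u).-1 0 ++ (m.+2%:Z - 1) :: R)); last first.
- move=> j; apply: crawl_entry_cat => //; last by rewrite size_u; lia.
  by rewrite all_cat !all_nseq /= !orbT.
- rewrite size_cat size_nseq /= size_u; lia.
rewrite big_cat /= big_cons sumz_nseq mul0rn add0r sR_eq rcons_cat rcons_cons.
congr (nseq _ 0 ++ _ :: rcons R _); rewrite ?size_u; lia.
Qed.

Lemma crawlw_comp_word_ones_cons i m R :
  crawlw (comp_word (nseq i 1 ++ m.+2%:Z :: R)) = comp_word (m.+1%:Z :: rcons R i.+1%:Z).
Proof.
rewrite comp_word_cat comp_word_nseq1.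
have -> : comp_word (m.+2%:Z :: R) = false :: comp_word (m.+1%:Z :: R).
  by rewrite !comp_word_consS.
by rewrite crawlw_cat -[rcons R _]cats1 -cat_cons comp_word_cat comp_word1 part_wordS.
Qed.

Lemma crawlw_comp_word_nseq1 n :
  (0 < n)%N -> crawlw (comp_word (nseq n 1)) = comp_word [:: n%:Z].
Proof. by case: n => // m _; rewrite comp_word_nseq1 crawlw_nseq_true comp_word1. Qed.

Lemma positive_split p : all (fun x => 0 < x) p ->
  p = nseq (size p) 1 \/ exists i m R, p = nseq i 1 ++ m.+2%:Z :: R.
Proof.
elim: p => [|x p IH] /=; first by left.
case/andP => x_pos /IH IHp; case: x x_pos => [[|[|m]]|] // _.
  case: IHp => [p_ones | [i [m [R ->]]]]; first by left; rewrite {1}p_ones.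
  by right; exists i.+1, m, R.
by right; exists 0%N, m, p.
Qed.

Lemma crawl_pad n p : (0 < n)%N -> is_composition n p -> exists q,
  [/\ is_composition n q, crawl n (pad n p) = pad n q & comp_word q = crawlw (comp_word p)].
Proof.
move=> n_gt0 p_comp; have [p_pos p_sum] := p_comp.
have [p_ones | [i [m [R p_eq]]]] := positive_split p_pos.
  have size_p : size p = n.
    by apply/eqP; rewrite -eqz_nat -p_sum {2}p_ones sumz_nseq natz.
  exists [:: n%:Z]; split; last first.
  - by rewrite p_ones size_p crawlw_comp_word_nseq1.
  - by rewrite /pad size_p subnn p_ones size_p crawl_nseq1.
  by split; rewrite /= ?big_seq1 // andbT ltz_nat.
exists (m.+1%:Z :: rcons R i.+1%:Z); split; last first.
- by rewrite p_eq crawlw_comp_word_ones_cons.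
- by rewrite p_eq crawl_pad_ones_cons -?p_eq.
move: p_pos p_sum; rewrite p_eq /is_composition all_cat /= all_rcons => /andP [_ ->] <-.
split=> //; rewrite big_cons big_rcons big_cat /= big_cons sumz_nseq natz.
by move: (\sum_(j <- R) j) => sR; lia.
Qed.

Lemma sum_nth_pad n p : (size p <= n)%N ->
  \sum_(n - size p <= i < n) nth 0 (pad n p) i = \sum_(x <- p) x.
Proof.
move=> size_le; rewrite -{1}(add0n (n - size p)%N) big_addn subKn // [RHS](big_nth 0).
by apply: eq_bigr => i _; rewrite nth_cat size_nseq ltnNge leq_addl /= addnK.
Qed.

Lemma inM_pad n p : (0 < n)%N -> is_composition n p -> inM n (pad n p).
Proof.
move=> n_gt0 [p_pos p_sum].
have size_le : (size p <= n)%N by rewrite -lez_nat -p_sum size_le_sum.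
have size_gt0 : (0 < size p)%N.
  by case: p p_sum {p_pos size_le} => [|//]; rewrite big_nil; lia.
split; first by rewrite size_cat size_nseq subnK.
exists (n - size p)%N; split; first by lia.
split; first by move=> i i_lt; rewrite nth_cat size_nseq i_lt nth_nseq i_lt.
split; last by rewrite sum_nth_pad.
move=> i /andP [i_ge i_lt]; rewrite nth_cat size_nseq ltnNge i_ge /=.
by apply: (all_nthP 0 p_pos); rewrite ltn_subLR // subnK.
Qed.

Lemma inM_pad_inv n c : inM n c -> exists2 p, is_composition n p & c = pad n p.
Proof.
move=> [size_c [k [/leq_trans/(_ (leq_pred n)) k_le [c_zero [c_pos c_sum]]]]].
have size_drop_c : size (drop k c) = (n - k)%N by rewrite size_drop size_c.
have pad_drop : pad n (drop k c) = c.
  rewrite /pad size_drop_c subKn //.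
  rewrite -[RHS](cat_take_drop k); congr (_ ++ _).
  apply: (@eq_from_nth _ 0); rewrite size_nseq ?size_takel ?size_c //.
  by move=> i i_lt; rewrite nth_nseq i_lt nth_take // c_zero.
exists (drop k c); last by [].
split.
  apply/(all_nthP 0) => i; rewrite size_drop_c => i_lt; rewrite nth_drop; apply: c_pos; lia.
have := @sum_nth_pad n (drop k c).
by rewrite pad_drop size_drop_c subKn // c_sum => /(_ (leq_subr k n)).
Qed.

Lemma crawlw_period_comp_word n p : (0 < n)%N -> is_composition n p ->
  iter n crawlw (comp_word p) = comp_word p.
Proof.
move=> n_gt0 [p_pos p_sum]; apply: crawlw_period => //.
  by apply/eqP; rewrite -eqz_nat size_comp_word // p_sum.
apply: last_comp_word => //; apply: contraTneq n_gt0 => p0.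
by rewrite -ltz_nat -p_sum p0 big_nil.
Qed.

Local Close Scope ring_scope.

Theorem mainTheorem13 (n : nat) (c : seq int) :
  (1 <= n)%N -> inM n c ->
  inM n (crawl n c) /\ iter n (crawl n) c = c.
Proof.
move=> n_gt0 /inM_pad_inv [p p_comp ->].
have orbit k : exists q, [/\ is_composition n q,
    iter k (crawl n) (pad n p) = pad n q & comp_word q = iter k crawlw (comp_word p)].
  elim: k => [|k [q [q_comp iter_q w_q]]]; first by exists p.
  have [q' [q'_comp crawl_q w_q']] := crawl_pad n_gt0 q_comp.
  by exists q'; rewrite !iterS iter_q crawl_q w_q' w_q.
split; first by have [q [q_comp -> _]] := crawl_pad n_gt0 p_comp; exact: inM_pad.
have [q [[q_pos _] -> w_q]] := orbit n.
rewrite crawlw_period_comp_word // in w_q.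
by rewrite (comp_word_inj q_pos _ w_q) //; case: p_comp.
Qed.
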